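(* For every infinite compact Hausdorff space $K$ there exists a point $p\in K$ such that $C(K,p)=\{f\in C(K):f(p)=0\}$ fails the ball fixed point property.
   Context: $C(K)$ is the real Banach space of continuous functions on $K$ with the sup norm, and $C(K,p)$ carries the restricted norm. A real Banach space $X$ has the ball fixed point property (BFPP) if every nonexpansive map $T\colon B_X\to B_X$ (i.e. $\|Tx-Ty\|\le\|x-y\|$) has a fixed point, where $B_X$ is the closed unit ball. *)

From HB Require Import structures.
From mathcomp Require Import all_boot all_order all_algebra.
From mathcomp Require Import all_classical all_reals all_analysis.
Set Implicit Arguments. Unset Strict Implicit. Unset Printing Implicit Defensive.
Import Order.TTheory GRing.Theory Num.Theory.
Local Open Scope classical_set_scope.
Local Open Scope ring_scope.

Definition supnorm (K : Type) (R : realType) (f : K -> R) : R :=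
  sup [set `|f x| | x in [set: K]].

Definition CKp_ball (K : topologicalType) (R : realType) (p : K) : set (K -> R) :=
  [set f | continuous f /\ f p = 0 /\ supnorm f <= 1].

Definition CKp_BFPP (K : topologicalType) (R : realType) (p : K) : Prop :=
  forall T : (K -> R) -> (K -> R),
    (forall f, @CKp_ball K R p f -> @CKp_ball K R p (T f)) ->
    (forall f g, @CKp_ball K R p f -> @CKp_ball K R p g ->
       supnorm (T f - T g) <= supnorm (f - g)) ->
    exists2 f, @CKp_ball K R p f & T f = f.

From HB Require Import structures.
From mathcomp Require Import all_boot all_order all_algebra.
From mathcomp Require Import all_classical all_reals all_analysis.
From mathcomp Require Import lra.
(* If [u >= 0] is continuous with [u p = 0], then [f |-> min 1 (f + u)] is a
   nonexpansive self-map of the unit ball of C(K,p), and a fixed point [f] forces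
   [u = 0] wherever [f < 1], hence near [p]. It therefore suffices to find a
   nonnegative continuous [u] whose zero set is not open. If there were none,
   zero sets of Urysohn functions would be clopen, so clopen sets would separate
   points, and the infinite space K would contain pairwise disjoint nonempty
   clopen sets [C n]. The function equal to [1/(n+1)] on [C n] and to [0]
   elsewhere is then continuous, but it vanishes at a cluster point of the
   [C n], which exists by compactness, without vanishing near it. *)

Set Implicit Arguments. Unset Strict Implicit. Unset Printing Implicit Defensive.
Import Order.TTheory GRing.Theory Num.Theory.
Import numFieldNormedType.Exports.
Local Open Scope classical_set_scope.
Local Open Scope ring_scope.

Lemma norm_minB_le (R : realDomainType) (c a b : R) :
  `|Num.min c a - Num.min c b| <= `|a - b|.
Proof.
have h1 := ler_norm (a - b).
have h2 : - (a - b) <= `|a - b| by rewrite -normrN ler_norm.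
have [ha|ha] := leP c a; have [hb|hb] := leP c b;
  rewrite ?(min_l ha) ?(min_r (ltW ha)) ?(min_l hb) ?(min_r (ltW hb));
  rewrite ler_norml; apply/andP; split; lra.
Qed.

Section supnorm.
Context {R : realType} {K : topologicalType}.

Lemma supnorm_le (f : K -> R) (c : R) (x0 : K) :
  (forall x, `|f x| <= c) -> supnorm f <= c.
Proof. by move=> fc; apply: ge_sup; [exists `|f x0|, x0 | move=> _ [x _ <-]]. Qed.

Hypothesis cK : compact [set: K].

Lemma ler_supnorm (f : K -> R) (x : K) : continuous f -> `|f x| <= supnorm f.
Proof.
move=> cf; have /(@compact_bounded R R^o) [M [_ fM]] : compact (f @` [set: K]).
  by apply: continuous_compact => //; exact: continuous_subspaceT.
apply: ub_le_sup; last by exists x.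
by exists (M + 1) => _ [y _ <-]; apply: (fM (M + 1)); [rewrite ltrDl | exists y].
Qed.

Lemma CKp_ball_le1 (p : K) (f : K -> R) (x : K) : CKp_ball p f -> `|f x| <= 1.
Proof. by move=> [cf [_ f1]]; exact: le_trans (ler_supnorm x cf) f1. Qed.

End supnorm.

Section shift_min1.
Context {R : realType} {K : topologicalType}.
Variables (p : K) (u : K -> R).
Hypotheses (cK : compact [set: K]) (cu : continuous u).
Hypotheses (u_ge0 : forall x, 0 <= u x) (up0 : u p = 0).

Definition shift_min1 (f : K -> R) : K -> R := fun x => Num.min 1 (f x + u x).

Lemma shift_min1_ball (f : K -> R) : CKp_ball p f -> CKp_ball p (shift_min1 f).
Proof.
move=> fB; have [cf [fp0 _]] := fB; split; last split.
- move=> x; apply: (@continuous_min R K (fun=> 1) (fun x => f x + u x)).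
    exact: cvg_cst.
  by apply: cvgD; [exact: cf | exact: cu].
- by rewrite /shift_min1 fp0 up0 addr0 min_r.
apply: (supnorm_le p) => x; have := CKp_ball_le1 cK x fB.
have := u_ge0 x; rewrite /shift_min1 !ler_norml le_min ge_min lexx => ux /andP[fx _].
by rewrite orTb andbT; apply/andP; split; lra.
Qed.

Lemma shift_min1_nonexpansive (f g : K -> R) : CKp_ball p f -> CKp_ball p g ->
  supnorm (shift_min1 f - shift_min1 g) <= supnorm (f - g).
Proof.
move=> [cf _] [cg _]; apply: (supnorm_le p) => x.
apply: le_trans (ler_supnorm cK x (fun y => continuousB (cf y) (cg y))).
by have := norm_minB_le 1 (f x + u x) (g x + u x); rewrite opprD addrACA subrr addr0.
Qed.

Lemma CKp_BFPP_vanish_near : @CKp_BFPP K R p -> \forall x \near p, u x = 0.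
Proof.
move=> BFPP; have [f [cf [fp0 _]] fixf] :=
  BFPP shift_min1 shift_min1_ball shift_min1_nonexpansive.
have /cvgrPdist_lt /(_ 1 ltr01) : f x @[x --> p] --> f p := cf p.
apply: filterS => x; rewrite fp0 sub0r normrN => /(le_lt_trans (ler_norm _)) fx1.
have : Num.min 1 (f x + u x) = f x by rewrite -[in RHS]fixf.
by have := u_ge0 x; have [] := leP 1 (f x + u x); lra.
Qed.

End shift_min1.

Section disjoint_clopens.
Context {T : topologicalType}.
Hypothesis clopen_sep : forall x y : T, x <> y -> exists2 C, clopen C & C x /\ ~ C y.

Definition clopen_piece (S C : set T) :=
  [/\ clopen C, C !=set0, C `<=` S, clopen (S `\` C) & infinite_set (S `\` C)].

Lemma exists_clopen_piece (S : set T) :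
  clopen S -> infinite_set S -> exists C, clopen_piece S C.
Proof.
move=> cS iS; have [x Sx] := infinite_setN0 iS.
have [y [Sy yx]] := infinite_setN0 (infinite_setD iS (finite_set1 x)).
have [G cG [Gx Gy]] := clopen_sep (fun xy => yx (esym xy)).
have cSG : clopen (S `\` G) by rewrite setDE; apply: clopenI => //; exact: clopenC.
have cSIG : clopen (S `&` G) by exact: clopenI.
have [finSG|infSG] := pselect (finite_set (S `\` G)).
  exists (S `\` G); rewrite /clopen_piece setDD; split => //.
  - by exists y; split.
  - by move=> finSIG; apply: iS; rewrite -(setUIDK S G) finite_setU.
exists (S `&` G); rewrite /clopen_piece setDIr setDv set0U; split => //.
- by exists x; split.
Qed.

Hypothesis T_infinite : infinite_set [set: T].

Lemma disjoint_clopen_seq : exists C : nat -> set T,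
  [/\ forall n, clopen (C n), forall n, C n !=set0 &
      forall n m x, C n x -> C m x -> n = m].
Proof.
pose piece (S : set T) := xget set0 (clopen_piece S).
pose rest n := iter n (fun S => S `\` piece S) setT.
have rest_inv n : clopen (rest n) /\ infinite_set (rest n).
  elim: n => [|n [cS iS]]; first by split => //; exact: clopenT.
  by have [] := xgetPex set0 (exists_clopen_piece cS iS).
have Ppiece n : clopen_piece (rest n) (piece (rest n)).
  by have [cS iS] := rest_inv n; have := xgetPex set0 (exists_clopen_piece cS iS).
have rest_decr n k : rest (k + n)%N `<=` rest n.
  by elim: k => [|k IH] // y; rewrite addSn => -[/IH].
have disj n m x : (n < m)%N -> piece (rest n) x -> ~ piece (rest m) x.
  move=> nm pnx pmx; have [_ _ sub _ _] := Ppiece m.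
  have := rest_decr n.+1 (m - n.+1)%N; rewrite subnK // => /(_ x (sub x pmx)).
  by case.
exists (fun n => piece (rest n)); split.
- by move=> n; have [] := Ppiece n.
- by move=> n; have [] := Ppiece n.
- move=> n m x pn pm; have [nm|mn|//] := ltngtP n m.
  + by case: (disj n m x nm pn pm).
  + by case: (disj m n x mn pm pn).
Qed.

End disjoint_clopens.

Section staircase.
Context {R : realType} {T : topologicalType}.
Variable C : nat -> set T.
Hypotheses (C_clopen : forall n, clopen (C n))
  (C_disj : forall n m x, C n x -> C m x -> n = m).

Definition staircase (x : T) : R :=
  if pselect (exists n, C n x) then (xget 0%N (C^~ x)).+1%:R^-1 else 0.

Lemma staircaseE n x : C n x -> staircase x = n.+1%:R^-1.
Proof.
move=> Cnx; rewrite /staircase; case: pselect => [ex|]; last by case; exists n.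
by rewrite (C_disj (xgetPex 0%N ex) Cnx).
Qed.

Lemma staircase0 x : (forall n, ~ C n x) -> staircase x = 0.
Proof.
by move=> nC; rewrite /staircase; case: pselect => // -[n Cnx]; case: (nC n).
Qed.

Lemma staircase_ge0 x : 0 <= staircase x.
Proof.
have [[n Cnx]|nC] := pselect (exists n, C n x); last first.
  by rewrite staircase0 // => n Cnx; apply: nC; exists n.
by rewrite (staircaseE Cnx) invr_ge0.
Qed.

Lemma near_notin_prefix x M : (forall n, ~ C n x) ->
  \forall y \near x, forall k, (k < M)%N -> ~ C k y.
Proof.
move=> nC; elim: M => [|M IH]; first exact: nearW.
have nCM : nbhs x (~` C M).
  by apply: open_nbhs_nbhs; split; [apply: closed_openC; case: (C_clopen M) | exact: nC].
apply: filterS2 IH nCM => y nCy nCMy k; rewrite ltnS leq_eqVlt => /orP[/eqP->//|].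
exact: nCy.
Qed.

Lemma continuous_staircase : continuous staircase.
Proof.
move=> x; have [[n Cnx]|nC] := pselect (exists n, C n x).
  apply: (near_cst_continuous (n.+1%:R^-1 : R)).
  have : nbhs x (C n) by apply: open_nbhs_nbhs; split => //; case: (C_clopen n).
  by apply: filterS => y /staircaseE.
have {}nC n : ~ C n x by move=> Cnx; apply: nC; exists n.
apply/cvgrPdist_lt => e e0; rewrite staircase0 //.
set M := Num.truncn e^-1.
have stepM : M.+1%:R^-1 < e.
  by rewrite -[e]invrK ltf_pV2 ?posrE ?invr_gt0 // truncnS_gt.
apply: filterS (near_notin_prefix M nC) => y nCy; rewrite sub0r normrN.
have [[n Cny]|nCy'] := pselect (exists n, C n y); last first.
  by rewrite staircase0 ?normr0 // => n Cny; apply: nCy'; exists n.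
rewrite (staircaseE Cny) ger0_norm ?invr_ge0 //; apply: le_lt_trans stepM.
rewrite lef_pV2 ?posrE // ler_nat ltnS leqNgt; apply/negP => nM.
exact: nCy n nM Cny.
Qed.

Lemma staircase_zero_set_not_open : compact [set: T] -> (forall n, C n !=set0) ->
  ~ open [set x | staircase x = 0].
Proof.
move=> cT C_neq0 oZ; have [pt ptC] := choice C_neq0.
have [q [_ clq]] := cT (pt @ \oo) _ filterT.
have tail_in k : (pt @ \oo) (pt @` [set n | (k < n)%N]).
  by apply: filterS (nbhs_infty_gt k) => n kn; exists n.
have nCq k : ~ C k q.
  move=> Ckq; have : nbhs q (C k).
    by apply: open_nbhs_nbhs; split => //; case: (C_clopen k).
  move=> /(clq _ _ (tail_in k)) [_ [[n kn <-] /(C_disj (ptC n))]] nk.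
  by move: kn; rewrite nk /= ltnn.
have : nbhs q [set x | staircase x = 0].
  by apply: open_nbhs_nbhs; split => //; exact: staircase0.
move=> /(clq _ _ (tail_in 0%N)) [_ [[n _ <-]]] /=.
by rewrite (staircaseE (ptC n)) => /eqP; rewrite invr_eq0 pnatr_eq0.
Qed.

End staircase.

Section zero_sets.
Context {R : realType} {K : topologicalType}.
Hypotheses (hK : hausdorff_space K) (cK : compact [set: K]).

Lemma clopen_separation_of_open_zero_sets :
  (forall u : K -> R, continuous u -> (forall x, 0 <= u x) -> open [set x | u x = 0]) ->
  forall x y : K, x <> y -> exists2 C, clopen C & C x /\ ~ C y.
Proof.
move=> zero_open x y xy; have accK := hausdorff_accessible hK.
have sep : uniform_separator [set x] [set y].
  apply: (@normal_completely_regular R K (compact_normal hK cK) accK).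
    exact: accessible_closed_set1 accK y.
  by move=> /= yx; apply: xy.
pose f : K -> R := Urysohn [set x] [set y].
have cf : continuous f := @Urysohn_continuous K R [set x] [set y].
have f_ge0 z : 0 <= f z.
  have /= := @Urysohn_range K R [set x] [set y] (f z) (ex_intro2 _ _ z I erefl).
  by rewrite in_itv /= => /andP[].
exists [set z | f z = 0]; first split.
- exact: zero_open.
- apply: (@preimage_closed _ _ f [set 0 : R]) => [z _|]; first exact: cf.
  exact: closed_eq.
- split; first by apply: (Urysohn_sub0 sep); exists x.
  move=> /= fy0; have : f y = 1 by apply: (Urysohn_sub1 sep); exists y.
  by rewrite fy0 => /esym/eqP; rewrite oner_eq0.
Qed.

Lemma exists_nonopen_zero_set : infinite_set [set: K] ->
  exists u : K -> R, [/\ continuous u, forall x, 0 <= u x & ~ open [set x | u x = 0]].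
Proof.
move=> iK; apply: contrapT => all_open.
have zero_open (u : K -> R) :
    continuous u -> (forall x, 0 <= u x) -> open [set x | u x = 0].
  by move=> cu u_ge0; apply: contrapT => nZ; apply: all_open; exists u.
have [C [C_clopen C_neq0 C_disj]] :=
  disjoint_clopen_seq (clopen_separation_of_open_zero_sets zero_open) iK.
apply: (staircase_zero_set_not_open C_clopen C_disj cK C_neq0).
exact: zero_open (continuous_staircase C_clopen C_disj) (staircase_ge0 C_disj).
Qed.

End zero_sets.

Unset Implicit Arguments.
Local Close Scope ring_scope.

Theorem mainTheorem17 (R : realType) (K : topologicalType) :
  hausdorff_space K -> compact [set: K] -> infinite_set [set: K] ->
  exists p : K, ~ @CKp_BFPP K R p.
Proof.
move=> hK cK iK; have [u [cu u_ge0 nZ]] := @exists_nonopen_zero_set R K hK cK iK.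
apply: contrapT => no_p; apply: nZ; rewrite openE => p up0.
have BFPP : @CKp_BFPP K R p by apply: contrapT => nB; apply: no_p; exists p.
exact: CKp_BFPP_vanish_near cK cu u_ge0 up0 BFPP.
Qed.
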